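(* Let $M>0$ and let $\phi$ be a real odd $C^\infty$ $2\pi$-periodic function with zero mean such that $\|\partial_x^2w\|_H^2-(w\partial_x\phi,w)\ge M\|w\|_H^2$ for all $w\in H^2$ with $w(0)=0$. For $s\in\mathbb R$ put $\phi_s(x)=\phi(x-s)$ and for $u\in H$ define $F(u):=\min_{s\in[-\pi,\pi]}\|u-\phi_s\|_H^2$. Let $u(t)\in H_0$, $t\in[0,T]$, be smooth. Then $t\mapsto F(u(t))$ is absolutely continuous and $$\frac{d}{dt}F(u(t))=\frac{d}{dt}\|v(t)\|_H^2=2(\partial_tu(t),v(t))\quad\text{for almost all }t\in[0,T],$$ where $v(t)=u(t)-\phi_{s^*(t)}$ and $s^*(t)$ is a minimizer in the definition of $F(u(t))$.
   Context: $H=L^2_{per}(-\pi,\pi)$ with inner product $(v,w)=\frac1{2\pi}\int_{-\pi}^{\pi}v\bar w\,dx$; $H_0$ is the subspace of zero-mean functions; $H^2$ is the periodic Sobolev space. *)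

From HB Require Import structures.
From mathcomp Require Import all_boot all_order all_algebra.
From mathcomp Require Import all_classical all_reals all_analysis.
Set Implicit Arguments. Unset Strict Implicit. Unset Printing Implicit Defensive.
Import Order.TTheory GRing.Theory Num.Theory.
Import numFieldNormedType.Exports.
Local Open Scope classical_set_scope.
Local Open Scope ring_scope.

Section Defs.
Variable R : realType.

Notation mu := (@lebesgue_measure R).

Definition periodic2pi (f : R -> R) : Prop := forall x, f (x + 2 * pi) = f x.

Definition ipH (f g : R -> R) : R :=
  (2 * pi)^-1 * Rintegral mu `[- pi, pi]%classic (fun x => f x * g x).

Definition normH2 (f : R -> R) : R := ipH f f.

Definition zero_mean (f : R -> R) : Prop :=
  Rintegral mu `[- pi, pi]%classic f = 0.

Definition smooth (f : R -> R) : Prop :=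
  forall (n : nat) (x : R), derivable (derive1n n f) x 1.

Definition dt (u : R -> R -> R) : R -> R -> R :=
  fun t x => derive1 (fun s => u s x) t.
Definition dx (u : R -> R -> R) : R -> R -> R :=
  fun t x => derive1 (u t) x.

Fixpoint pder (w : seq bool) (u : R -> R -> R) : R -> R -> R :=
  match w with
  | [::] => u
  | b :: w' => if b then dt (pder w' u) else dx (pder w' u)
  end.

Definition smooth2 (u : R -> R -> R) : Prop :=
  forall w : seq bool,
    (forall t x, derivable (fun s => pder w u s x) t 1 /\
                 derivable (pder w u t) x 1) /\
    continuous (fun p : R * R => pder w u p.1 p.2).

Definition abs_cont (a b : R) (f : R -> R) : Prop :=
  forall e : R, 0 < e -> exists2 d : R, 0 < d &
    forall (n : nat) (s t : nat -> R),
      (forall i, (i < n)%N -> a <= s i /\ s i <= t i /\ t i <= b) ->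
      (forall i, (i.+1 < n)%N -> t i <= s i.+1) ->
      \sum_(i < n) (t i - s i) < d ->
      \sum_(i < n) `|f (t i) - f (s i)| < e.

(* periodic Sobolev space H^2: w is 2pi-periodic, C^1, w' is absolutely
   continuous on every compact interval, and w'' (a.e. derivative of w')
   is square integrable over a period. *)
Definition H2per (w : R -> R) : Prop :=
  periodic2pi w /\
  (forall x, derivable w x 1) /\ continuous (derive1 w) /\
  (forall a b, abs_cont a b (derive1 w)) /\
  mu.-integrable `[- pi, pi]%classic
     (fun x => ((derive1 (derive1 w) x) ^+ 2)%:E).

Definition phishift (phi : R -> R) (s : R) : R -> R := fun x => phi (x - s).

(* F(u) = min_{s in [-pi,pi]} ||u - phi_s||^2 (an infimum, attained) *)
Definition Fdist (phi u : R -> R) : R :=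
  inf [set normH2 (fun x => u x - phishift phi s x) | s in `[- pi, pi]%classic].

Definition is_minimizer (phi u : R -> R) (s : R) : Prop :=
  `[- pi, pi]%classic s /\
  forall s', `[- pi, pi]%classic s' ->
    normH2 (fun x => u x - phishift phi s x) <= normH2 (fun x => u x - phishift phi s' x).

End Defs.

(* For a fixed translate s, t |-> ||u(t) - phi_s||^2 is C^2 in t, uniformly in
   s in [-pi, pi]. Hence if s minimizes at time t, then
   F(t') <= ||u(t') - phi_s||^2 <= F(t) + (t' - t) p(t) + C (t' - t)^2
   with p(t) = 2 (d_t u(t), u(t) - phi_s): p(t) is a supergradient of the
   semiconcave function F. Adding this inequality at t and at t' shows that
   2 C t - p(t) is nondecreasing, so p is continuous off a countable set, and
   that F is Lipschitz. Where p is continuous F is differentiable, and at a point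
   of differentiability every supergradient is the derivative (Fermat's rule for
   F minus the tangent parabola), which gives the formula for every minimizer. *)

From HB Require Import structures.
From mathcomp Require Import all_boot all_order all_algebra.
From mathcomp Require Import all_classical all_reals all_analysis.
From mathcomp Require Import ring lra.
Set Implicit Arguments. Unset Strict Implicit. Unset Printing Implicit Defensive.
Import Order.TTheory GRing.Theory Num.Theory.
Import numFieldNormedType.Exports.
Local Open Scope classical_set_scope.
Local Open Scope ring_scope.

Section calculus.
Variable R : realType.
Implicit Types (f df ddf : R -> R) (a b B : R).

Lemma derivable1_continuous f : (forall x, derivable f x 1) -> continuous f.
Proof. by move=> df x; apply/differentiable_continuous/derivable1_diffP. Qed.

Lemma derivable1_is_derive f x : derivable f x 1 -> is_derive x 1 f (derive1 f x).
Proof. by rewrite derive1E; exact: derivableP. Qed.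

Lemma is_derive_lipschitz f df a b B : (forall x : R, is_derive x 1 f (df x)) ->
  (forall x, a <= x <= b -> `|df x| <= B) ->
  forall x y, a <= x <= b -> a <= y <= b -> `|f y - f x| <= B * `|y - x|.
Proof.
move=> fdf dfB.
suff le_xy x y : a <= x <= b -> a <= y <= b -> x <= y -> `|f y - f x| <= B * `|y - x|.
  move=> x y xI yI; have [xy|/ltW yx] := leP x y; first exact: le_xy.
  by rewrite distrC [`|y - x|]distrC le_xy.
move=> /andP[ax xb] /andP[ay yb] xy.
have cf : continuous f by apply: derivable1_continuous => z; case: (fdf z).
have [c cI ->] := MVT_segment xy (fun z _ => fdf z) (continuous_subspaceT cf).
rewrite normrM ler_wpM2r //; apply: dfB; move: cI; rewrite in_itv /= => /andP[xc cy].
by rewrite (le_trans ax xc) (le_trans cy yb).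
Qed.

Lemma is_derive_taylor f df ddf a b B : (forall x : R, is_derive x 1 f (df x)) ->
  (forall x : R, is_derive x 1 df (ddf x)) -> (forall x, a <= x <= b -> `|ddf x| <= B) ->
  forall t t', a <= t <= b -> a <= t' <= b ->
  `|f t' - f t - (t' - t) * df t| <= B * (t' - t) ^+ 2.
Proof.
move=> fdf dfddf ddfB t t' tI t'I.
pose g := f - df t \*: (@id R).
have gdg (x : R) : is_derive x 1 g (df x - df t *: 1) by apply: is_deriveB.
set m := Num.min t t'; set M := Num.max t t'.
have mM x : m <= x <= M -> a <= x <= b.
  move: tI t'I => /andP[? ?] /andP[? ?] /andP[mx xM]; apply/andP; split.
    by apply: le_trans mx; rewrite le_min; apply/andP.
  by apply: le_trans xM _; rewrite ge_max; apply/andP.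
have dgB x : m <= x <= M -> `|df x - df t *: 1| <= B * `|t' - t|.
  move=> xI; rewrite [_ *: 1]mulr1.
  apply: le_trans (is_derive_lipschitz dfddf ddfB tI (mM _ xI)) _.
  have B0 : 0 <= B by apply: le_trans (ddfB _ tI).
  rewrite ler_wpM2l //; move: xI; rewrite /m /M.
  case: (leP t t') => [tt'|/ltW t't]; rewrite ?(min_l tt', max_r tt') ?(min_r t't, max_l t't).
    by move=> /andP[? ?]; rewrite !ger0_norm ?subr_ge0 //; lra.
  by move=> /andP[? ?]; rewrite !ler0_norm ?subr_le0 //; lra.
have tm : m <= t <= M by rewrite ge_min le_max lexx.
have t'm : m <= t' <= M by rewrite ge_min le_max lexx !orbT.
have := is_derive_lipschitz gdg dgB tm t'm.
have -> : g t' - g t = f t' - f t - (t' - t) * df t.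
  by rewrite /g !fctE /= -![_ *: _]/(_ * _); ring.
by rewrite -mulrA -expr2 real_normK ?num_real.
Qed.
End calculus.

Section bounds.
Variable R : realType.

Lemma continuous_bounded_segment (f : R -> R) a b : continuous f ->
  exists2 B : R, 0 <= B & forall x, a <= x <= b -> `|f x| <= B.
Proof.
move=> cf; have /compact_bounded[M [_ HM]] :=
  continuous_compact (continuous_subspaceT cf) (@segment_compact R a b).
exists (`|M| + 1); first by rewrite addr_ge0.
move=> x xI; apply: (HM (`|M| + 1)); first by have := ler_norm M; lra.
by exists x => //=; rewrite in_itv /= xI.
Qed.

Lemma continuous_bounded_rectangle (f : R * R -> R) a b c d : continuous f ->
  exists2 B : R, 0 <= B & forall t x, a <= t <= b -> c <= x <= d -> `|f (t, x)| <= B.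
Proof.
move=> cf; have /compact_bounded[M [_ HM]] := continuous_compact (continuous_subspaceT cf)
  (compact_setX (@segment_compact R a b) (@segment_compact R c d)).
exists (`|M| + 1); first by rewrite addr_ge0.
move=> t x tI xI; apply: (HM (`|M| + 1)); first by have := ler_norm M; lra.
by exists (t, x) => //=; rewrite !in_itv /= tI xI.
Qed.

Lemma inf_image_min (f : R -> R) (A : set R) s : A s -> (forall s', A s' -> f s <= f s') ->
  inf [set f s' | s' in A] = f s.
Proof.
move=> As fs; have lb : lbound [set f s' | s' in A] (f s) by move=> _ [s' As' <-]; exact: fs.
apply/le_anti; rewrite ge_inf //=; last by exists s.
  by rewrite lb_le_inf //; exists (f s), s.
by exists (f s).
Qed.
End bounds.

Section lipschitz.
Variable R : realType.

Lemma lipschitz_abs_cont (a b L : R) (F : R -> R) :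
  (forall t t', t \in `[a, b] -> t' \in `[a, b] -> `|F t' - F t| <= L * `|t' - t|) ->
  abs_cont a b F.
Proof.
move=> FL e e0; have L1 : 0 < `|L| + 1 by rewrite ltr_wpDl.
exists (e / (`|L| + 1)); first by rewrite divr_gt0.
move=> n s t st _ sum_lt.
have st_ge0 i : (i < n)%N -> 0 <= t i - s i by move=> /st [_ [sit _]]; rewrite subr_ge0.
have Fst (i : 'I_n) : `|F (t i) - F (s i)| <= `|L| * (t i - s i).
  have [asi [sit tib]] := st i (ltn_ord i).
  rewrite -[t i - s i]ger0_norm ?st_ge0 //.
  apply: le_trans (FL _ _ _ _) (ler_wpM2r _ (ler_norm L)) => //.
    by rewrite in_itv /= asi (le_trans sit tib).
  by rewrite in_itv /= tib (le_trans asi sit).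
apply: le_lt_trans (ler_sum _ (fun i _ => Fst i)) _; rewrite -mulr_sumr.
have : (`|L| + 1) * \sum_(i < n) (t i - s i) < e by rewrite mulrC -ltr_pdivlMr.
have : 0 <= \sum_(i < n) (t i - s i) by apply: sumr_ge0 => i _; exact: st_ge0.
have := normr_ge0 L; nra.
Qed.

Lemma local_lipschitz_continuous (f : R -> R) (c L : R) : 0 <= L ->
  (forall s, `|s - c| <= 1 -> `|f s - f c| <= L * `|s - c|) -> {for c, continuous f}.
Proof.
move=> L0 fL; apply/cvgrPdist_le => e e0; near=> s.
have sc : `|s - c| <= Num.min 1 (e / (L + 1)).
  rewrite distrC; near: s; apply: cvgr_dist_le; first exact: cvg_id.
  by rewrite lt_min ltr01 divr_gt0 // ltr_wpDl.
move: sc; rewrite le_min => /andP[sc1 sce]; rewrite distrC.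
apply: le_trans (fL _ sc1) _.
move: sce; rewrite ler_pdivlMr ?ltr_wpDl //; have := normr_ge0 (s - c); nra.
Unshelve. all: by end_near.
Qed.
End lipschitz.

Section local_extremum.
Variable R : realType.

Lemma is_derive_local_max (f : R -> R) (c e : R) : 0 < e -> derivable f c 1 ->
  (forall x, `|x - c| < e -> f x <= f c) -> is_derive c 1 f 0.
Proof.
move=> e0 df cmax; apply: DeriveDef => //.
have near_c : \forall h \near (0 : R), f (h + c) <= f c.
  near=> h; apply: cmax; rewrite addrK; near: h; exact: (@nbhs0_lt R R^o e e0).
apply/eqP; rewrite eq_le; apply/andP; split.
  rewrite /derive -(cvg_lim _ (cvg_dnbhs_at_right df)) //; apply: limr_le.
    exact: cvgP (cvg_dnbhs_at_right df).
  near=> h; rewrite /= [h *: 1]mulr1.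
  apply: mulr_ge0_le0; first by rewrite invr_ge0 ltW //; near: h; exact: nbhs_right_gt.
  by rewrite subr_le0; near: h; apply: cvg_within.
rewrite /derive -(cvg_lim _ (cvg_dnbhs_at_left df)) //; apply: limr_ge.
  exact: cvgP (cvg_dnbhs_at_left df).
near=> h; rewrite /= [h *: 1]mulr1.
apply: mulr_le0; first by rewrite invr_le0 ltW //; near: h; exact: nbhs_left_lt.
by rewrite subr_le0; near: h; apply: cvg_within.
Unshelve. all: by end_near.
Qed.

Lemma is_derive_tangent_parabola (t d C : R) :
  is_derive t 1 (fun x : R => (x - t) * d + C * (x - t) ^+ 2) d.
Proof.
pose l : R -> R := id - cst t.
have dl : is_derive t (1 : R) l 1 by apply: is_derive_eq; rewrite subr0.
have dq : is_derive t (1 : R) (l * cst d + cst C * l ^+ 2)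
    (l t *: 0 + d *: 1 + (cst C t *: ((2%:R * l t ^+ 1) *: 1) + (l ^+ 2) t *: 0)).
  typeclasses eauto.
have -> : (fun x : R => (x - t) * d + C * (x - t) ^+ 2) = l * cst d + cst C * l ^+ 2.
  by apply/funext => x; rewrite /l !fctE.
apply: is_derive_eq dq _; rewrite /l !fctE subrr /= expr1 mulr0 !scaler0 !scale0r !add0r.
by rewrite -[C *: 0]/(C * 0) -[d%:A]/(d * 1) mulr0 mulr1 !addr0.
Qed.

Lemma derive1_supergradient (F : R -> R) (t d C e : R) : 0 < e -> derivable F t 1 ->
  (forall x, `|x - t| < e -> F x <= F t + (x - t) * d + C * (x - t) ^+ 2) ->
  derive1 F t = d.
Proof.
move=> e0 dF sup.
pose Q x := (x - t) * d + C * (x - t) ^+ 2.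
have dG : is_derive t 1 (F - Q) (derive1 F t - d).
  apply: is_deriveB; last exact: is_derive_tangent_parabola.
  by rewrite derive1E; exact: derivableP.
have d0 : is_derive t 1 (F - Q) 0.
  apply: (is_derive_local_max e0) => [|x xt]; first by case: dG.
  have := sup x xt; rewrite !fctE /Q subrr mul0r expr0n /= mulr0; lra.
apply/eqP; rewrite -subr_eq0; case: dG => _ <-; by case: d0 => _ ->.
Qed.
End local_extremum.

Section monotone.
Variable R : realType.
Variables (a b : R) (f : R -> R).
Hypothesis ndf : {in `[a, b] &, nondecreasing_fun f}.

Lemma nondecreasing_discontinuity t : a < t < b -> ~ {for t, continuous f} ->
  discontinuity f t.
Proof.
move=> /andP[ta tb] ncf.
have tI : t \in `[a, b] by rewrite in_itv /= !ltW.
have cl : cvg (f x @[x --> t^'-]).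
  apply: nondecreasing_at_left_is_cvgr; near=> x;
    have ax : a <= x by near: x; exact: nbhs_left_ge.
    by move=> y z yI zI; apply: ndf; apply: subset_itvW ax (ltW tb) _ _.
  exists (f t) => _ [y yI <-]; apply: ndf => //; first exact: subset_itvW ax (ltW tb) _ _.
  by move: yI; rewrite /= in_itv => /andP[_ /ltW].
have cr : cvg (f x @[x --> t^'+]).
  apply: nondecreasing_at_right_is_cvgr; near=> x;
    have xb : x <= b by near: x; exact: nbhs_right_le.
    by move=> y z yI zI; apply: ndf; apply: subset_itvW (ltW ta) xb _ _.
  exists (f t) => _ [y yI <-]; apply: ndf => //; first exact: subset_itvW (ltW ta) xb _ _.
  by move: yI; rewrite /= in_itv => /andP[/ltW].
have fl : lim (f x @[x --> t^'-]) <= f t.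
  apply: limr_le => //; near=> x.
  have ax : a < x by near: x; exact: nbhs_left_gt.
  have xt : x < t by near: x; exact: nbhs_left_lt.
  by apply: ndf; rewrite ?in_itv /= ?ltW // (lt_trans xt tb).
have fr : f t <= lim (f x @[x --> t^'+]).
  apply: limr_ge => //; near=> x.
  have tx : t < x by near: x; exact: nbhs_right_gt.
  have xb : x < b by near: x; exact: nbhs_right_lt.
  by apply: ndf; rewrite ?in_itv /= ?ltW // (lt_trans ta tx).
split => //; apply/negP => /eqP lr; apply: ncf; apply/left_right_continuousP.
have El : lim (f x @[x --> t^'-]) = f t by apply/le_anti; rewrite fl lr fr.
have Er : lim (f x @[x --> t^'+]) = f t by rewrite -lr.
by split; [rewrite -{1}El | rewrite -{1}Er].
Unshelve. all: by end_near.
Qed.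

Lemma countable_nondecreasing_noncontinuity :
  countable [set t | t \in (`]a, b[) /\ ~ {for t, continuous f}].
Proof.
apply: sub_countable (discontinuity_countable ndf); apply: subset_card_le => t [tI ncf].
by split => //; apply: nondecreasing_discontinuity => //; rewrite -in_itv.
Qed.
End monotone.

Section supergradient.
Variable R : realType.

Definition is_supergradient (a b : R) (F : R -> R) (C t d : R) :=
  forall t', t' \in `[a, b] -> F t' <= F t + (t' - t) * d + C * (t' - t) ^+ 2.

Variables (a b C : R) (F p : R -> R).
Hypothesis C_ge0 : 0 <= C.
Hypothesis Fp : forall t, t \in `[a, b] -> is_supergradient a b F C t (p t).

Lemma supergradient_shift_nondecreasing :
  {in `[a, b] &, nondecreasing_fun (fun t => 2 * C * t - p t)}.
Proof.
move=> t t' tI t'I; rewrite le_eqVlt => /predU1P[-> //|tt'].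
have := Fp tI t'I; have := Fp t'I tI.
have -> : t - t' = - (t' - t) by rewrite opprB.
have h0 : 0 < t' - t by rewrite subr_gt0.
set h := t' - t => le1 le2.
have : 0 <= h * (2 * C * h - p t' + p t).
  by rewrite sqrrN mulNr in le1; rewrite mulrDr mulrBr; lra.
rewrite pmulr_rge0 // /h; lra.
Qed.

Lemma supergradient_taylor t t' : t \in `[a, b] -> t' \in `[a, b] ->
  `|F t' - F t - (t' - t) * p t| <= `|t' - t| * `|p t' - p t| + C * (t' - t) ^+ 2.
Proof.
move=> tI t'I; have := Fp tI t'I; have := Fp t'I tI.
have -> : t - t' = - (t' - t) by rewrite opprB.
set h := t' - t; rewrite sqrrN !mulNr => le1 le2.
have := ler_norm (h * (p t' - p t)); have := ler_norm (- (h * (p t' - p t))).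
rewrite normrN normrM ler_norml => n1 n2; apply/andP; split; rewrite mulrBr in n1 n2 *; lra.
Qed.

Lemma supergradient_lipschitz (P : R) : (forall t, t \in `[a, b] -> `|p t| <= P) ->
  forall t t', t \in `[a, b] -> t' \in `[a, b] ->
  `|F t' - F t| <= (P + C * (b - a)) * `|t' - t|.
Proof.
move=> pP t t' tI t'I; have := Fp tI t'I; have := Fp t'I tI.
have -> : t - t' = - (t' - t) by rewrite opprB.
set h := t' - t; rewrite sqrrN !mulNr => le1 le2.
have hab : `|h| <= b - a.
  move: tI t'I; rewrite !in_itv /= => /andP[? ?] /andP[? ?].
  by rewrite /h ler_norml; apply/andP; split; lra.
have hp s : s \in `[a, b] -> `|h * p s| <= P * `|h|.
  by move=> sI; rewrite normrM mulrC ler_wpM2r ?pP.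
have hC : C * h ^+ 2 <= C * (b - a) * `|h|.
  by rewrite -real_normK ?num_real // -mulrA ler_wpM2l // expr2 ler_wpM2r.
have := hp _ tI; have := hp _ t'I; rewrite !ler_norml => /andP[? ?] /andP[? ?].
rewrite [(P + _) * _]mulrDl; apply/andP; split; lra.
Qed.

Lemma supergradient_derivable t : t \in `]a, b[ -> {for t, continuous p} ->
  derivable F t 1.
Proof.
move=> tab cp; apply: (cvgP (p t)); apply/cvgrPdist_le => e e0.
have /nbhs0P nearI := near_in_itvoo tab.
have /nbhs0P nearp : \forall x \near t, `|p x - p t| <= e / 2.
  move/cvgrPdist_le : cp => /(_ _ (divr_gt0 e0 (ltr0Sn _ 1))).
  by apply: filterS => x; rewrite distrC.
have nearC : \forall h \near (0 : R), C * `|h| <= e / 2.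
  near=> h; have : `|h| <= e / 2 / (C + 1).
    by near: h; apply: (@nbhs0_le R R^o); rewrite !divr_gt0 ?ltr_wpDl.
  by rewrite ler_pdivlMr ?ltr_wpDl //; have := normr_ge0 h; nra.
near=> h.
have h0 : h != 0 by near: h; exact: nbhs_dnbhs_neq.
have tI : t \in `[a, b] by exact: subset_itv_oo_cc.
have thI : t + h \in `[a, b] by apply: subset_itv_oo_cc; near: h; apply: cvg_within.
have := supergradient_taylor tI thI; rewrite [t + h - t]addrAC subrr add0r.
have -> : p t - h^-1 *: ((F \o shift t) h%:A - F t) = - (h^-1 * (F (t + h) - F t - h * p t)).
  by rewrite /= [h%:A]mulr1 [h + t]addrC -[_ *: _]/(h^-1 * _); field.
rewrite normrN normrM normfV ler_pdivrMl ?normr_gt0 // => /le_trans; apply.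
have p2 : `|p (t + h) - p t| <= e / 2 by near: h; apply: cvg_within.
have c2 : C * `|h| <= e / 2 by near: h; apply: cvg_within.
rewrite -real_normK ?num_real //; have := normr_ge0 h; nra.
Unshelve. all: by end_near.
Qed.

Lemma supergradient_derive1 t d : t \in `]a, b[ -> derivable F t 1 ->
  is_supergradient a b F C t d -> derive1 F t = d.
Proof.
rewrite in_itv /= => /andP[ta tb] dF Fd.
apply: (derive1_supergradient (e := Num.min (t - a) (b - t))) => // [|x].
  by rewrite lt_min !subr_gt0 ta tb.
rewrite lt_min => /andP[xa xb]; apply: Fd.
have := ler_norm (x - t); have := ler_norm (- (x - t)); rewrite normrN in_itv /=.
move=> n1 n2; apply/andP; split; lra.
Qed.

Lemma ae_supergradient_derivable :
  \forall t \ae (@lebesgue_measure R), t \in `[a, b] ->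
    derivable F t 1 /\ forall d, is_supergradient a b F C t d -> derive1 F t = d.
Proof.
pose g t := 2 * C * t - p t.
pose N := [set t | t \in (`]a, b[) /\ ~ {for t, continuous g}].
have negl (A : set R) : countable A -> (@lebesgue_measure R).-negligible A.
  move=> cA; exists A; split => //; last exact: countable_lebesgue_measure0.
  by apply: countable_measurable cA; exact: measurable_set1.
have cN : countable N :=
  countable_nondecreasing_noncontinuity supergradient_shift_nondecreasing.
apply: (negligibleS _ (negligibleU (negligibleU (negl N cN) (negl _ (countable1 a)))
  (negl _ (countable1 b)))) => t /= nP.
have tI : t \in `[a, b] by apply: contrapT => nI; apply: nP => /nI.
have [->|ta] := eqVneq t a; first by left; right.
have [->|tb] := eqVneq t b; first by right.
have tab : t \in `]a, b[.
  by move: tI; rewrite !in_itv /= !le_eqVlt eq_sym (negPf ta) (negPf tb).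
left; left; split => // cg; apply: nP => _.
have cp : {for t, continuous p}.
  have -> : p = (fun s => 2 * C * s) - g by apply/funext => s; rewrite /g !fctE; ring.
  by apply: continuousB => //; apply: continuousM; [exact: cvg_cst | exact: cvg_id].
have dF := supergradient_derivable tab cp.
by split => // d; exact: supergradient_derive1.
Qed.
End supergradient.

Section mean.
Variable R : realType.
Local Notation mu := (@lebesgue_measure R).
Local Notation mean f := ((2 * pi)^-1 * Rintegral mu `[- pi, pi]%classic f).

Let measurable_period : measurable (`[- pi, pi]%classic : set (measurableTypeR R)).
Proof. exact: measurable_itv. Qed.

Let period_length : fine (mu `[- pi, pi]%classic) = 2 * pi.
Proof.
rewrite lebesgue_measure_itv /= lte_fin ifT; last by rewrite gtrN ?pi_gt0.
by rewrite /= opprK -[2]/(1 + 1) mulrDl mul1r.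
Qed.

Let continuous_integrable (f : R -> R) : continuous f ->
  mu.-integrable `[- pi, pi]%classic (EFin \o f).
Proof.
move=> cf; apply: continuous_compact_integrable; first exact: segment_compact.
exact: continuous_subspaceT.
Qed.

Lemma norm_mean_le (f : R -> R) (B : R) : continuous f ->
  (forall x, - pi <= x <= pi -> `|f x| <= B) -> `|mean f| <= B.
Proof.
move=> cf fB; have pi2 : 0 < 2 * pi :> R by rewrite mulr_gt0 ?pi_gt0.
have cnf : continuous (fun x => `|f x|).
  by move=> x; apply: continuous_comp (cf x) _; exact: norm_continuous.
rewrite normrM ger0_norm ?invr_ge0 ?(ltW pi2) // ler_pdivrMl //.
apply: le_trans (le_normr_Rintegral measurable_period (continuous_integrable cf)) _.
have cB : continuous (fun _ : R => B) by move=> ?; exact: cvg_cst.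
apply: le_trans (le_Rintegral measurable_period (continuous_integrable cnf)
  (continuous_integrable cB) _) _.
  by move=> x /=; rewrite in_itv /=; exact: fB.
by rewrite Rintegral_cst // period_length mulrC.
Qed.

Let continuous_mul (f g : R -> R) : continuous f -> continuous g ->
  continuous (fun x => f x * g x).
Proof. by move=> cf cg x; apply: continuousM; [exact: cf | exact: cg]. Qed.

Lemma norm_ipH_le (f g : R -> R) (B : R) : continuous f -> continuous g ->
  (forall x, - pi <= x <= pi -> `|f x * g x| <= B) -> `|ipH f g| <= B.
Proof. by move=> cf cg; apply: norm_mean_le; exact: continuous_mul. Qed.

Lemma norm_ipH_comb_le (f1 g1 f2 g2 f3 g3 : R -> R) (c B : R) :
  continuous f1 -> continuous g1 -> continuous f2 -> continuous g2 ->
  continuous f3 -> continuous g3 ->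
  (forall x, - pi <= x <= pi -> `|f1 x * g1 x - f2 x * g2 x - c * (f3 x * g3 x)| <= B) ->
  `|ipH f1 g1 - ipH f2 g2 - c * ipH f3 g3| <= B.
Proof.
move=> cf1 cg1 cf2 cg2 cf3 cg3; have c1 := continuous_mul cf1 cg1.
have c2 := continuous_mul cf2 cg2; have c3 := continuous_mul cf3 cg3.
have c12 : continuous (fun x : R => f1 x * g1 x - f2 x * g2 x).
  move=> x; apply: cvgB; [exact: c1 | exact: c2].
have c3c : continuous (fun x : R => c * (f3 x * g3 x)).
  by apply: continuous_mul => // x; exact: cvg_cst.
have c123 : continuous (fun x : R => f1 x * g1 x - f2 x * g2 x - c * (f3 x * g3 x)).
  by move=> x; apply: cvgB; [exact: c12 | exact: c3c].
move=> /(norm_mean_le c123).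
have i1 := continuous_integrable c1; have i2 := continuous_integrable c2.
have i3 := continuous_integrable c3.
rewrite (RintegralB measurable_period (continuous_integrable c12) (continuous_integrable c3c)).
rewrite (RintegralB measurable_period i1 i2) (RintegralZl _ measurable_period i3) /ipH.
by congr (`|_| <= _); ring.
Qed.
End mean.

Section distance_to_translates.
Variable R : realType.
Variables (phi : R -> R) (u : R -> R -> R).
Hypothesis dphi : forall x, derivable phi x 1.
Hypothesis ddphi : forall x, derivable (derive1 phi) x 1.
Hypothesis smooth_u : smooth2 u.

Local Notation gap t s := (fun x => u t x - phishift phi s x).

Definition dist2 t s := normH2 (gap t s).
Definition slope t s := 2 * ipH (dt u t) (gap t s).

Let continuous_phi : continuous phi.
Proof. exact: derivable1_continuous. Qed.

Let continuous_dphi : continuous (derive1 phi).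
Proof. exact: derivable1_continuous. Qed.

Let continuous_u t : continuous (u t).
Proof. by apply: derivable1_continuous => x; exact: ((smooth_u [::]).1 t x).2. Qed.

Let continuous_dtu t : continuous (dt u t).
Proof. by apply: derivable1_continuous => x; exact: ((smooth_u [:: true]).1 t x).2. Qed.

Let continuous_gap t s : continuous (gap t s).
Proof.
have cs : continuous (fun y : R => y - s).
  by move=> y; apply: cvgB; [exact: cvg_id | exact: cvg_cst].
have cps : continuous (fun x => phi (x - s)).
  by move=> x; apply: continuous_comp; [exact: cs | exact: continuous_phi].
by move=> x; apply: cvgB; [exact: continuous_u | exact: cps].
Qed.

Let is_derive_u (x t : R) : is_derive t 1 (fun r => u r x) (dt u t x).
Proof. exact/derivable1_is_derive/((smooth_u [::]).1 t x).1. Qed.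

Let is_derive_dtu (x t : R) : is_derive t 1 (fun r => dt u r x) (dt (dt u) t x).
Proof. exact/derivable1_is_derive/((smooth_u [:: true]).1 t x).1. Qed.

Lemma Fdist_minimizer t s : is_minimizer phi (u t) s -> Fdist phi (u t) = dist2 t s.
Proof. by move=> [sI smin]; exact: (@inf_image_min _ (dist2 t) _ s sI smin). Qed.


Lemma dist2_lipschitz t c : exists2 L, 0 <= L &
  forall s, `|s - c| <= 1 -> `|dist2 t s - dist2 t c| <= L * `|s - c|.
Proof.
have [Bu Bu0 uB] := continuous_bounded_segment (- pi) pi (@continuous_u t).
have [Bp Bp0 phiB] := continuous_bounded_segment (- pi - c - 1) (pi - c + 1) continuous_phi.
have [Lp Lp0 dphiB] :=
  continuous_bounded_segment (- pi - c - 1) (pi - c + 1) continuous_dphi.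
exists (2 * Lp * (Bu + Bp)); first by rewrite !mulr_ge0 // addr_ge0.
move=> s sc; rewrite -[_ - dist2 t c]subr0 -(mul0r (dist2 t s)).
apply: norm_ipH_comb_le => // x /andP[xl xr].
have window r : `|r - c| <= 1 -> - pi - c - 1 <= x - r <= pi - c + 1.
  by rewrite ler_norml => /andP[? ?]; apply/andP; split; lra.
have gapB r : `|r - c| <= 1 -> `|u t x - phishift phi r x| <= Bu + Bp.
  move=> rc; apply: le_trans (ler_normB _ _) _.
  by apply: lerD; [apply: uB; rewrite xl xr | exact: phiB (window _ rc)].
have := is_derive_lipschitz (fun y => derivable1_is_derive (@dphi y)) dphiB
  (window _ sc) (window c _); rewrite subrr normr0 => /(_ ler01).
have -> : x - c - (x - s) = s - c by ring.
have -> : (u t x - phishift phi s x) * (u t x - phishift phi s x)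
    - (u t x - phishift phi c x) * (u t x - phishift phi c x)
    - 0 * ((u t x - phishift phi s x) * (u t x - phishift phi s x))
    = (phi (x - c) - phi (x - s)) * ((u t x - phishift phi s x) + (u t x - phishift phi c x)).
  by rewrite /phishift; ring.
move=> dphi_le; rewrite normrM.
have -> : 2 * Lp * (Bu + Bp) * `|s - c| = Lp * `|s - c| * (2 * (Bu + Bp)) by ring.
apply: ler_pM => //; apply: le_trans (ler_normD _ _) _.
by rewrite mulr2n mulrDl mul1r; apply: lerD; apply: gapB; rewrite // subrr normr0.
Qed.

Lemma continuous_dist2 t : continuous (dist2 t).
Proof. by move=> c; have [L L0 /(local_lipschitz_continuous L0)] := dist2_lipschitz t c. Qed.

Lemma minimizer_exists t : exists s, is_minimizer phi (u t) s.
Proof.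
have pi_le : - pi <= pi :> R by have := pi_ge0 R; lra.
have [c cI cmin] := EVT_min pi_le (continuous_subspaceT (@continuous_dist2 t)).
by exists c; split => // s sI; exact: cmin.
Qed.

Lemma gap_bounded a b : exists2 A : R, 0 <= A & forall t s x,
  a <= t <= b -> - pi <= s <= pi -> - pi <= x <= pi -> `|u t x - phishift phi s x| <= A.
Proof.
have [Bu Bu0 uB] := continuous_bounded_rectangle a b (- pi) pi (smooth_u [::]).2.
have [Bp Bp0 phiB] := continuous_bounded_segment (- (2 * pi)) (2 * pi) continuous_phi.
exists (Bu + Bp) => [|t s x tI sI xI]; first exact: addr_ge0.
apply: le_trans (ler_normB _ _) _; apply: lerD; first exact: uB.
by apply: phiB; move: xI sI => /andP[? ?] /andP[? ?]; apply/andP; split; lra.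
Qed.

Lemma dist2_taylor a b : exists2 C : R, 0 <= C & forall t t' s,
  a <= t <= b -> a <= t' <= b -> - pi <= s <= pi ->
  `|dist2 t' s - dist2 t s - (t' - t) * slope t s| <= C * (t' - t) ^+ 2.
Proof.
have [A A0 gapB] := gap_bounded a b.
have [B1 B10 dtuB] := continuous_bounded_rectangle a b (- pi) pi (smooth_u [:: true]).2.
have [B2 B20 dttuB] :=
  continuous_bounded_rectangle a b (- pi) pi (smooth_u [:: true; true]).2.
exists (2 * A * B2 + B1 ^+ 2); first by rewrite addr_ge0 ?sqr_ge0 // !mulr_ge0.
move=> t t' s tI t'I sI.
have -> : (t' - t) * slope t s = 2 * (t' - t) * ipH (dt u t) (gap t s).
  by rewrite /slope; ring.
apply: norm_ipH_comb_le => // x xI; set h := t' - t.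
have := is_derive_taylor (@is_derive_u x) (@is_derive_dtu x) (fun r rI => dttuB r x rI xI)
  tI t'I.
have := is_derive_lipschitz (@is_derive_u x) (fun r rI => dtuB r x rI xI) tI t'I.
rewrite -/h; set d := u t' x - u t x; set e := d - h * dt u t x => dB eB.
have -> : (u t' x - phishift phi s x) * (u t' x - phishift phi s x)
    - (u t x - phishift phi s x) * (u t x - phishift phi s x)
    - 2 * h * (dt u t x * (u t x - phishift phi s x))
    = 2 * (u t x - phishift phi s x) * e + d ^+ 2 by rewrite /e /d; ring.
apply: le_trans (ler_normD _ _) _; rewrite [(_ + B1 ^+ 2) * _]mulrDl; apply: lerD.
  rewrite -mulrA normrM ger0_norm // -!mulrA ler_wpM2l // normrM.
  exact: ler_pM (gapB _ _ _ tI sI xI) eB.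
rewrite normrX -[h ^+ 2]real_normK ?num_real // -exprMn.
by rewrite lerXn2r ?nnegrE ?mulr_ge0.
Qed.

Lemma slope_bounded a b : exists P : R, forall t s, a <= t <= b -> - pi <= s <= pi ->
  `|slope t s| <= P.
Proof.
have [A A0 gapB] := gap_bounded a b.
have [B1 B10 dtuB] := continuous_bounded_rectangle a b (- pi) pi (smooth_u [:: true]).2.
exists (2 * (B1 * A)) => t s tI sI.
rewrite /slope normrM ger0_norm // ler_wpM2l //; apply: norm_ipH_le => // x xI.
by rewrite normrM; apply: ler_pM => //; [exact: dtuB | exact: gapB].
Qed.

Lemma Fdist_semiconcave a b : exists2 C : R, 0 <= C & forall t s, t \in `[a, b] ->
  is_minimizer phi (u t) s ->
  is_supergradient a b (fun r => Fdist phi (u r)) C t (slope t s).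
Proof.
have [C C0 taylor] := dist2_taylor a b.
exists C => // t s tI smin t' t'I; have [s' s'min] := minimizer_exists t'.
rewrite (Fdist_minimizer s'min) (Fdist_minimizer smin).
have s'_le_s : dist2 t' s' <= dist2 t' s := s'min.2 s smin.1.
apply: le_trans s'_le_s _.
have sI : - pi <= s <= pi by have [+ _] := smin; rewrite /= in_itv.
move: tI t'I; rewrite !in_itv /= => tI t'I.
by have := taylor t t' s tI t'I sI; rewrite ler_norml => /andP[_]; lra.
Qed.
End distance_to_translates.

Theorem lemma3p8 (R : realType) (M T : R) (phi : R -> R) (u : R -> R -> R) :
  0 < M ->
  smooth phi ->
  (forall x, phi (- x) = - phi x) ->
  periodic2pi phi ->
  zero_mean phi ->
  (forall w : R -> R, H2per w -> w 0 = 0 ->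
     normH2 (derive1 (derive1 w)) - ipH (fun x => w x * derive1 phi x) w
       >= M * normH2 w) ->
  smooth2 u ->
  (forall t, `[0, T]%classic t -> periodic2pi (u t) /\ zero_mean (u t)) ->
  (forall t, `[0, T]%classic t -> exists s, is_minimizer phi (u t) s) /\
  abs_cont 0 T (fun t => Fdist phi (u t)) /\
  (\forall t \ae (@lebesgue_measure R), `[0, T]%classic t ->
     derivable (fun r => Fdist phi (u r)) t 1 /\
     forall s, is_minimizer phi (u t) s ->
       derive1 (fun r => Fdist phi (u r)) t =
         2 * ipH (dt u t) (fun x => u t x - phishift phi s x)).
Proof.
move=> _ smooth_phi _ _ _ _ smooth_u _.
have dphi : forall x, derivable phi x 1 := smooth_phi 0%N.
have ddphi : forall x, derivable (derive1 phi) x 1 := smooth_phi 1%N.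
have mins := minimizer_exists dphi ddphi smooth_u.
have [C C0 supF] := Fdist_semiconcave dphi ddphi smooth_u 0 T.
have [P slopeP] := slope_bounded dphi smooth_u 0 T.
have [sel selP] := choice mins.
pose F r := Fdist phi (u r).
pose p t := slope phi u t (sel t).
have Fp t : t \in `[0, T] -> is_supergradient 0 T F C t (p t).
  by move=> tI; exact: supF.
split; first by move=> t _; exact: mins.
split.
  apply: lipschitz_abs_cont (supergradient_lipschitz C0 Fp _) => t tI.
  by apply: slopeP; [move: tI; rewrite in_itv | have [+ _] := selP t; rewrite /= in_itv].
have [N [mN N0 sub]] := ae_supergradient_derivable C0 Fp.
exists N; split => // t /= nt; apply: sub => /= aet; apply: nt => tI.
have [dF eqF] := aet tI; split => // s /(supF t s tI); exact: eqF.
Qed.
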